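(* Let $X$ be a vertex-weighted simplicial complex on $n$ vertices, fix $k$, and let $U^{down}$ be a $\Pi^\pm_k$-projected $(1,\alpha,0)$-unitary encoding of $\Pi^\pm_kP^{down}\Pi^\pm_k$, i.e. $(\Pi^\pm_k\otimes\langle0^\alpha|)U^{down}(\Pi^\pm_k\otimes|0^\alpha\rangle)=\Pi^\pm_kP^{down}\Pi^\pm_k$. Let $V^{down}=((I_n\otimes HZ\otimes I)\otimes I_\alpha)U^{down}$, where $HZ$ (product of Hadamard and Pauli-$Z$) acts on qubit $n+1$. Then $(\Pi_k\otimes\langle0^\alpha|)V^{down}(\Pi_k\otimes|0^\alpha\rangle)=\frac{\Delta^{down}_k}{K^{down}\sqrt2}$.
   Context: Vertices $V=\{1,\dots,n\}$ with weights $w:V\to(0,\infty)$. $X$ is a family of nonempty subsets of $V$ closed under nonempty subsets; $X_k$ = $k$-simplices (size $k+1$), identified with Hamming-weight-$(k+1)$ strings $x_\sigma\in\{0,1\}^n$. Oriented $k$-simplex: ordering $[v_0,\dots,v_k]$ up to even permutations, positive if an even permutation of the increasing order. $X^\pm_k=X^+_k\cup X^-_k$, $\overline\sigma$ opposite orientation, $\sigma_+$ the positive one of $\sigma,\overline\sigma$. $[v_0,\dots,v_k]$ induces on the face missing $v_j$ the orientation $(-1)^j[v_0,..,\widehat{v_j},..,v_k]$ (sign $-$ meaning opposite orientation). For oriented $\sigma,\sigma'$ with distinct underlying simplices, $\sigma\sim_\downarrow\sigma'$ if they share a $(k-1)$-face and induce the same orientation on it; $v_\sigma$ ($v_{\sigma'}$)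 is the vertex of $\sigma$ not in $\sigma'$ (vice versa). $\Delta^{down}_k$ is the matrix indexed by $X^+_k$ with $(\Delta^{down}_k)_{\sigma\sigma}=\sum_{v\in\sigma}w(v)^2$, $(\Delta^{down}_k)_{\sigma\sigma'}=w(v_\sigma)w(v_{\sigma'})$ if $\sigma\sim_\downarrow\sigma'$, $-w(v_\sigma)w(v_{\sigma'})$ if $\sigma\sim_\downarrow\overline{\sigma'}$, $0$ otherwise. $\Theta$ is an absorbing state, $S_k=X^\pm_k\cup\{\Theta\}$; $|\sigma\rangle$ is the $(n+2)$-qubit state $|x_\sigma\rangle|00\rangle$ ($\sigma\in X^+_k$), $|x_\sigma\rangle|10\rangle$ ($\sigma\in X^-_k$), $|0^n\rangle|01\rangle$ ($\Theta$). $\Pi_k$, $\Pi^\pm_k$ project onto $\mathrm{span}\{|\sigma\rangle\}$ over $X^+_k$, $X^\pm_k$; matrices indexed by $X^+_k$ or $S_k$ act on these spans in this basis and as $0$ elsewhere. $U$ is a $\Pi_s$-projected $(a,\alpha,\epsilon)$-unitary encoding of $A$ if $\|A-a(\Pi_s\otimes\langle0^\alpha|)U(\Pi_s\otimes|0^\alpha\rangle)\|\le\epsilon$. For $\sigma\in X^\pm_k$: $\tilde i(\sigma)$ = position of the $i$-th $1$ of $x_\sigma$, $j(\tau)$ = position of the $j$-th $0$ of $x_\tau$; $\sigma^\downarrow(i)=\sigma\setminus\{\tilde i(\sigma)\}$. $K^{down}=\max_{\sigma\in X^\pm_k}\sum_{i\in[k+1],j\in[n-k]}w(\tilde i(\sigma))w(j(\sigma^\downarrow(i)))$;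 $\eta^{down}_\sigma=1-\frac1{K^{down}}\sum_{\sigma'\in X^+_k}|(\Delta^{down}_k)_{\sigma'\sigma_+}|$. $P^{down}$ on $S_k$: for $\sigma,\sigma'\in X^\pm_k$, $P^{down}_{\sigma\sigma}=\sum_{v\in\sigma}w(v)^2/K^{down}$, $P^{down}_{\sigma\sigma'}=w(v_\sigma)w(v_{\sigma'})/K^{down}$ if $\sigma\sim_\downarrow\sigma'$, $P^{down}_{\sigma\Theta}=\eta^{down}_\sigma$, $P^{down}_{\Theta\Theta}=1$, all other entries $0$. *)

From HB Require Import structures.
From mathcomp Require Import all_boot all_order all_algebra.
Set Implicit Arguments. Unset Strict Implicit. Unset Printing Implicit Defensive.
Import Order.TTheory GRing.Theory Num.Theory.
Local Open Scope ring_scope.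

(* Basis states of N qubits are indexed by i : 'I_(2^N); qubit q (0-based,
   q = 0 is the most significant / leftmost qubit) of the basis state i. *)
Definition qbit (N : nat) (i : 'I_(2^N)) (q : nat) : bool :=
  odd (i %/ 2 ^ (N - q.+1)).

Definition b2o (b : bool) : 'I_2 := inord b.

Definition hadamard {C : numClosedFieldType} : 'M[C]_2 :=
  (sqrtC 2)^-1 *: \matrix_(i, j) (if ((i : nat) == 1%N) && ((j : nat) == 1%N)
                                   then -1 else 1).
Definition pauliZ {C : numClosedFieldType} : 'M[C]_2 :=
  \matrix_(i, j) (if i == j then (if (i : nat) == 0%N then 1 else -1) else 0).
Definition HZ {C : numClosedFieldType} : 'M[C]_2 := hadamard *m pauliZ.

(* the N-qubit operator I ⊗ ... ⊗ A ⊗ ... ⊗ I, with A acting on qubit q *)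
Definition gate1 {C : numClosedFieldType} (N q : nat) (A : 'M[C]_2) : 'M[C]_(2^N) :=
  \matrix_(i, j)
    (if [forall r : 'I_N, ((r : nat) != q) ==> (qbit i r == qbit j r)]
     then A (b2o (qbit i q)) (b2o (qbit j q)) else 0).

(* |i>|0^a> : the system basis state i (m qubits) followed by a ancillas in |0> *)
Lemma anc0_lt (m a : nat) (i : 'I_(2^m)) : (i * 2 ^ a < 2 ^ (m + a))%N.
Proof. by rewrite expnD ltn_pmul2r ?expn_gt0. Qed.
Definition withanc0 (m a : nat) (i : 'I_(2^m)) : 'I_(2^(m + a)) :=
  Ordinal (anc0_lt a i).

(* (I ⊗ <0^a|) M (I ⊗ |0^a>) *)
Definition compress {C : numClosedFieldType} (m a : nat) (M : 'M[C]_(2^(m + a)))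
  : 'M[C]_(2^m) :=
  \matrix_(i, j) M (withanc0 a i) (withanc0 a j).

(* vertices are 'I_n (vertex v <-> qubit v); a complex is a family of
   nonempty vertex sets closed under nonempty subsets *)
Definition simplicial_complex (n : nat) (X : {set {set 'I_n}}) : Prop :=
  set0 \notin X /\
  forall s t : {set 'I_n}, s \in X -> t \subset s -> t != set0 -> t \in X.

Definition Xk (n : nat) (X : {set {set 'I_n}}) (k : nat) : {set {set 'I_n}} :=
  [set s in X | #|s| == k.+1].

(* oriented simplex: (underlying set, true = positive orientation) *)
Definition osimp (n : nat) := ({set 'I_n} * bool)%type.

(* is the orientation induced by sigma on its face sigma.1 \ {v} the positive
   one?  (v = v_j in increasing order gives sign (-1)^j) *)
Definition induced_pos (n : nat) (sg : osimp n) (v : 'I_n) : bool :=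
  if odd #|[set u in sg.1 | (u < v)%N]| then ~~ sg.2 else sg.2.

Definition down_adj (n k : nat) (sg sg' : osimp n) : bool :=
  [&& #|sg.1| == k.+1, #|sg'.1| == k.+1 &
   [exists v : 'I_n, exists v' : 'I_n,
     [&& sg.1 :\: sg'.1 == [set v], sg'.1 :\: sg.1 == [set v'] &
         induced_pos sg v == induced_pos sg' v']]].

Definition wout (n : nat) (C : numClosedFieldType) (w : 'I_n -> C)
  (s s' : {set 'I_n}) : C :=
  if [pick v in s :\: s'] is Some v then w v else 0.

(* Delta^down_k, indexed by positive k-simplices (given by their vertex sets) *)
Definition Delta_down (n : nat) (C : numClosedFieldType) (w : 'I_n -> C) (k : nat)
  (s s' : {set 'I_n}) : C :=
  if s == s' then \sum_(v in s) w v ^+ 2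
  else if down_adj k (s, true) (s', true) then wout w s s' * wout w s' s
  else if down_adj k (s, true) (s', false) then - (wout w s s' * wout w s' s)
  else 0.

(* K^down = max over sigma in X^±_k of
   sum_{i in [k+1], j in [n-k]} w(i~(sigma)) w(j(sigma^down(i))),
   i.e. sum over v in sigma and u not in sigma \ {v} of w(v) w(u). *)
Definition K_down (n : nat) (C : numClosedFieldType) (X : {set {set 'I_n}})
  (w : 'I_n -> C) (k : nat) : C :=
  \big[Num.max/0]_(s in Xk X k)
     \sum_(v in s) \sum_(u in ~: (s :\ v)) w v * w u.

Definition eta_down (n : nat) (C : numClosedFieldType) (X : {set {set 'I_n}})
  (w : 'I_n -> C) (k : nat) (sg : osimp n) : C :=
  1 - (K_down X w k)^-1 * \sum_(s' in Xk X k) `|Delta_down w k s' sg.1|.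

(* P^down on S_k; None stands for the absorbing state Theta *)
Definition P_down (n : nat) (C : numClosedFieldType) (X : {set {set 'I_n}})
  (w : 'I_n -> C) (k : nat) (a b : option (osimp n)) : C :=
  match a, b with
  | Some sg, Some sg' =>
      if sg == sg' then (\sum_(v in sg.1) w v ^+ 2) / K_down X w k
      else if down_adj k sg sg' then wout w sg.1 sg'.1 * wout w sg'.1 sg.1 / K_down X w k
      else 0
  | Some sg, None => eta_down X w k sg
  | None, None => 1
  | None, Some _ => 0
  end.

(* basis state i = |x>|b1 b2> with x = qubits 0..n-1, b1 = qubit n, b2 = qubit n+1 *)
Definition supp (n : nat) (i : 'I_(2^(n+2))) : {set 'I_n} :=
  [set v : 'I_n | qbit i v].
Definition flag1 (n : nat) (i : 'I_(2^(n+2))) : bool := qbit i n.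
Definition flag2 (n : nat) (i : 'I_(2^(n+2))) : bool := qbit i n.+1.

Definition inS (n : nat) (X : {set {set 'I_n}}) (k : nat) (i : 'I_(2^(n+2))) : bool :=
  if flag2 i then (supp i == set0) && ~~ flag1 i else supp i \in Xk X k.
(* the state of S_k it encodes: |x 00> positive, |x 10> negative, |0 01> Theta *)
Definition state_of (n : nat) (i : 'I_(2^(n+2))) : option (osimp n) :=
  if flag2 i then None else Some (supp i, ~~ flag1 i).
Definition inXp (n : nat) (X : {set {set 'I_n}}) (k : nat) (i : 'I_(2^(n+2))) : bool :=
  [&& supp i \in Xk X k, ~~ flag1 i & ~~ flag2 i].
Definition inXpm (n : nat) (X : {set {set 'I_n}}) (k : nat) (i : 'I_(2^(n+2))) : bool :=
  (supp i \in Xk X k) && ~~ flag2 i.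

(* matrix indexed by S_k, acting on span{|sigma>} and as 0 elsewhere *)
Definition embS (n : nat) (C : numClosedFieldType) (X : {set {set 'I_n}}) (k : nat)
  (F : option (osimp n) -> option (osimp n) -> C) : 'M[C]_(2^(n+2)) :=
  \matrix_(i, j) (if inS X k i && inS X k j then F (state_of i) (state_of j) else 0).
Definition embXp (n : nat) (C : numClosedFieldType) (X : {set {set 'I_n}}) (k : nat)
  (G : {set 'I_n} -> {set 'I_n} -> C) : 'M[C]_(2^(n+2)) :=
  \matrix_(i, j) (if inXp X k i && inXp X k j then G (supp i) (supp j) else 0).

Definition Pi_k (n : nat) (C : numClosedFieldType) (X : {set {set 'I_n}}) (k : nat)
  : 'M[C]_(2^(n+2)) := \matrix_(i, j) ((i == j) && inXp X k i)%:R.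
Definition Pi_pm_k (n : nat) (C : numClosedFieldType) (X : {set {set 'I_n}}) (k : nat)
  : 'M[C]_(2^(n+2)) := \matrix_(i, j) ((i == j) && inXpm X k i)%:R.

From mathcomp Require Import all_boot all_order all_algebra.
From mathcomp Require Import zify.
Set Implicit Arguments. Unset Strict Implicit. Unset Printing Implicit Defensive.
Import Order.TTheory GRing.Theory Num.Theory.

(* HZ acting on the orientation qubit maps the row <x 0| to (<x 0| - <x 1|)/sqrt 2,
   so the entry of the compressed V between positive simplices s and s' is
   (P_{s s'} - P_{~s s'}) / sqrt 2, where ~s is s with the opposite orientation.
   Stepping from s to s' and from ~s to s' are the two mutually exclusive ways
   in which s and s' can be lower adjacent, with sign + and - in Delta^down. *)

Lemma bit_decomp e i : i = i %/ 2^e.+1 * 2^e.+1 + odd (i %/ 2^e) * 2^e + i %% 2^e.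
Proof.
rewrite {1}(divn_eq i (2^e)); congr (_ + _).
rewrite expnSr divnMA -[X in X * 2^e](odd_double_half (i %/ 2^e)) -divn2 -muln2.
by rewrite mulnDl addnC -mulnA (mulnC 2).
Qed.

Lemma odd_div_splice h (b : bool) lo e e' : lo < 2^e ->
  odd ((h * 2^e.+1 + b * 2^e + lo) %/ 2^e') =
  if e' < e then odd (lo %/ 2^e') else if e' == e then b
  else odd (h %/ 2^(e' - e.+1)).
Proof.
move=> lo_lt; case: (ltngtP e' e) => e'e.
- have -> : h * 2^e.+1 + b * 2^e = (h * 2^(e - e').+1 + b * 2^(e - e')) * 2^e'.
    by rewrite mulnDl -!mulnA -!expnD addSn subnK // ltnW.
  rewrite divnMDl ?expn_gt0 // oddD oddD !oddM !oddX /=.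
  by rewrite andbF /= subn_eq0 leqNgt e'e /= andbF.
- have -> : 2^e' = 2^e.+1 * 2^(e' - e.+1) by rewrite -expnD subnKC.
  rewrite -addnA divnMA divnMDl ?expn_gt0 // (@divn_small (b * 2^e + lo)) ?addn0 //.
  by rewrite expnS; case: b; lia.
- subst e'.
  have -> : h * 2^e.+1 + b * 2^e = (h * 2 + b) * 2^e by rewrite expnS mulnDl mulnA.
  by rewrite divnMDl ?expn_gt0 // divn_small // addn0 oddD oddM andbF; case: b.
Qed.

Lemma splice_lt h (b : bool) lo e m : h < 2^m -> lo < 2^e ->
  h * 2^e.+1 + b * 2^e + lo < 2^(m + e.+1).
Proof.
move=> h_lt lo_lt; rewrite expnD.
have : h.+1 * 2^e.+1 <= 2^m * 2^e.+1 by rewrite leq_mul2r h_lt orbT.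
by rewrite expnS; case: b; lia.
Qed.

Lemma odd_div_pow2_inj N x y : x < 2^N -> y < 2^N ->
  (forall e, e < N -> odd (x %/ 2^e) = odd (y %/ 2^e)) -> x = y.
Proof.
elim: N x y => [|N IH] x y x_lt y_lt bits.
  by move: x_lt y_lt; rewrite expn0 !ltnS !leqn0 => /eqP -> /eqP ->.
have half : x %/ 2 = y %/ 2.
  apply: IH; rewrite ?ltn_divLR -?expnSr // => e lt_eN.
  by rewrite -!divnMA -expnS; apply: bits.
have := bits 0 isT; rewrite expn0 !divn1 => bit0.
by rewrite -(odd_double_half x) -(odd_double_half y) bit0 -!divn2 half.
Qed.

Section Qubits.
Variable N : nat.
Implicit Types (i j : 'I_(2^N)) (q r : nat) (b : bool).

Lemma qbit_inj i j : (forall r : 'I_N, qbit i r = qbit j r) -> i = j.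
Proof.
move=> bits; apply/val_inj/(@odd_div_pow2_inj N); rewrite ?ltn_ord // => e lt_eN.
have lt_rN : N - e.+1 < N by lia.
have := bits (Ordinal lt_rN); rewrite /qbit /=.
by have -> : N - (N - e.+1).+1 = e by lia.
Qed.

Definition setqbit q i b : 'I_(2^N) :=
  let e := N - q.+1 in insubd i (i %/ 2^e.+1 * 2^e.+1 + b * 2^e + i %% 2^e).

Lemma qbit_setqbit q i b r : q < N -> r < N ->
  qbit (setqbit q i b) r = if r == q then b else qbit i r.
Proof.
move=> lt_qN lt_rN; rewrite /qbit /setqbit val_insubd; set e := N - q.+1.
have -> : i %/ 2^e.+1 * 2^e.+1 + b * 2^e + i %% 2^e < 2^N.
  have lt_eN : e < N by rewrite /e; lia.
  rewrite -[X in _ < 2^X](subnK lt_eN) splice_lt ?ltn_mod ?expn_gt0 //.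
  by rewrite ltn_divLR ?expn_gt0 // -expnD subnK.
rewrite [in RHS](bit_decomp e i) !odd_div_splice ?ltn_mod ?expn_gt0 //.
case: (eqVneq r q) => [->|neq_rq]; first by rewrite ltnn !eqxx.
by have -> : (N - r.+1 == e) = false by apply/negbTE/eqP; lia.
Qed.

End Qubits.

Section Ancillas.
Variables m a : nat.
Implicit Types (i : 'I_(2^m)) (r : nat).

Lemma qbit_withanc0 i r : r < m -> qbit (withanc0 a i) r = qbit i r.
Proof.
move=> lt_rm; rewrite /qbit /=.
have -> : m + a - r.+1 = (m - r.+1) + a by lia.
by rewrite expnD divnMr ?expn_gt0.
Qed.

Lemma qbit_withanc0_anc i r : m <= r -> r < m + a -> qbit (withanc0 a i) r = false.
Proof.
move=> le_mr lt_r; rewrite /qbit /=; set e := m + a - r.+1.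
have -> : 2^a = 2^(a - e) * 2^e by rewrite -expnD subnK // /e; lia.
rewrite mulnA mulnK ?expn_gt0 // oddM oddX.
have -> : (a - e == 0) = false by apply/negbTE; rewrite /e; lia.
by rewrite andbF.
Qed.

Lemma withanc0_setqbit q i b : q < m ->
  withanc0 a (setqbit q i b) = setqbit q (withanc0 a i) b.
Proof.
move=> lt_qm; apply: qbit_inj => r.
rewrite qbit_setqbit ?ltn_ord //; last by lia.
case: (ltnP r m) => [lt_rm | le_mr].
  by rewrite !qbit_withanc0 // qbit_setqbit.
by rewrite !qbit_withanc0_anc //; have -> : ((r : nat) == q) = false by lia.
Qed.

End Ancillas.

Local Open Scope ring_scope.

Section Gates.
Variable C : numClosedFieldType.

Lemma gate1_mulmxE N q p (A : 'M[C]_2) (M : 'M[C]_(2^N, p)) i j : (q < N)%N ->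
  (gate1 N q A *m M) i j =
  \sum_(b : bool) A (b2o (qbit i q)) (b2o b) * M (setqbit q i b) j.
Proof.
move=> lt_qN.
have gate1_setqbit b : gate1 N q A i (setqbit q i b) = A (b2o (qbit i q)) (b2o b).
  rewrite mxE qbit_setqbit // eqxx; case: forallP => // -[] r.
  by apply/implyP => neq_rq; rewrite qbit_setqbit // (negbTE neq_rq).
have neq_set : setqbit q i true != setqbit q i false.
  by apply/eqP => /(congr1 (fun l => qbit l q)); rewrite !qbit_setqbit // eqxx.
rewrite mxE big_bool (bigD1 (setqbit q i true)) //=.
rewrite (bigD1 (setqbit q i false)) 1?eq_sym //=.
rewrite !gate1_setqbit addrA big1 ?addr0 // => l /andP [neq_t neq_f].
rewrite mxE; case: forallP => [same | _]; last by rewrite mul0r.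
suff l_set : l = setqbit q i (qbit l q).
  by move: neq_t neq_f; rewrite l_set; case: qbit; rewrite eqxx ?andbF.
apply: qbit_inj => r; rewrite qbit_setqbit //; case: eqVneq => [-> // | neq_rq].
by have /implyP/(_ neq_rq)/eqP := same r.
Qed.

Lemma compress_gate1_mulmx m a q (A : 'M[C]_2) (U : 'M[C]_(2^(m + a))) : (q < m)%N ->
  @compress C m a (gate1 (m + a) q A *m U) = gate1 m q A *m @compress C m a U.
Proof.
move=> lt_qm; apply/matrixP => i j.
rewrite [LHS]mxE !gate1_mulmxE ?qbit_withanc0 //; last by lia.
by apply: eq_bigr => b _; rewrite -withanc0_setqbit // mxE.
Qed.

Lemma HZ_row0 (b : bool) : (HZ : 'M[C]_2) (b2o false) (b2o b) = (-1) ^+ b / sqrtC 2.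
Proof.
have b2o0 : b2o false = ord0 by apply: val_inj; rewrite /= inordK.
have b2o1 : b2o true = lift ord0 ord0 by apply: val_inj; rewrite /= inordK.
rewrite /HZ /hadamard /pauliZ mxE !big_ord_recl big_ord0 !mxE /=.
by case: b; rewrite ?b2o0 ?b2o1 /= !(mulr1, mulr0, addr0, add0r)
  ?mulrN1 ?expr0 ?expr1 ?mul1r ?mulN1r.
Qed.

End Gates.

Section Projections.
Variables (R : pzSemiRingType) (N : nat) (p : pred 'I_N).
Let P : 'M[R]_N := \matrix_(i, j) ((i == j) && p i)%:R.

Lemma mul_proj_mx (M : 'M[R]_N) i j : (P *m M) i j = if p i then M i j else 0.
Proof.
rewrite mxE (bigD1 i) //= big1 ?addr0 => [|l neq_li]; rewrite mxE.
  by rewrite eqxx /=; case: (p i); rewrite ?mul1r ?mul0r.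
by rewrite eq_sym (negbTE neq_li) mul0r.
Qed.

Lemma mul_mx_proj (M : 'M[R]_N) i j : (M *m P) i j = if p j then M i j else 0.
Proof.
rewrite mxE (bigD1 j) //= big1 ?addr0 => [|l neq_lj]; rewrite mxE.
  by rewrite eqxx /=; case: (p j); rewrite ?mulr1 ?mulr0.
by rewrite (negbTE neq_lj) mulr0.
Qed.

Lemma proj_conj_eq_entry (A B : 'M[R]_N) i j :
  P *m A *m P = P *m B *m P -> p i -> p j -> A i j = B i j.
Proof.
by move=> /matrixP /(_ i j) + pi pj; rewrite !mul_mx_proj !mul_proj_mx pi pj.
Qed.

End Projections.

Section LowerAdjacency.
Variables (n k : nat).
Implicit Types (s : {set 'I_n}) (b : bool).

Lemma down_adj_oppl s s' :
  down_adj k (s, false) (s', true) = down_adj k (s, true) (s', false).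
Proof.
rewrite /down_adj /=; congr [&& _, _ & _].
apply: eq_existsb => v; apply: eq_existsb => v'; rewrite /induced_pos /=.
by case: (odd _); case: (odd _); rewrite ?andbT ?andbF.
Qed.

Lemma down_adj_pos_neg s s' :
  down_adj k (s, true) (s', true) -> down_adj k (s, true) (s', false) = false.
Proof.
move=> /and3P [_ _ /existsP [v /existsP [v' /and3P [dv dv' ind]]]].
apply/negbTE/negP => /and3P [_ _ /existsP [u /existsP [u' /and3P [du du' ind']]]].
have /set1_inj vu : [set v] = [set u] by rewrite -(eqP dv) (eqP du).
have /set1_inj vu' : [set v'] = [set u'] by rewrite -(eqP dv') (eqP du').
by subst; move: ind ind'; rewrite /induced_pos /=; case: (odd _); case: (odd _).
Qed.

Lemma down_adj_same_set s b b' : down_adj k (s, b) (s, b') = false.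
Proof.
apply/negbTE/negP => /and3P [_ _ /existsP [v /existsP [v' /and3P [dv _ _]]]].
by move: dv; rewrite setDv => /eqP /setP /(_ v); rewrite !inE eqxx.
Qed.

End LowerAdjacency.

Lemma P_down_orient_diff (C : numClosedFieldType) n (X : {set {set 'I_n}})
    (w : 'I_n -> C) k s s' :
  P_down X w k (Some (s, true)) (Some (s', true))
    - P_down X w k (Some (s, false)) (Some (s', true))
  = Delta_down w k s s' / K_down X w k.
Proof.
rewrite /P_down /Delta_down !xpair_eqE /= andbT andbF down_adj_oppl.
case: eqVneq => [<- | neq_ss'].
  by rewrite down_adj_same_set subr0.
case adj_pp: (down_adj k (s, true) (s', true)).
  by rewrite down_adj_pos_neg // subr0.
by case: (down_adj k (s, true) (s', false)); rewrite sub0r ?mulNr ?oppr0 ?mul0r.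
Qed.

Section OrientationFlag.
Variable n : nat.
Implicit Types (i : 'I_(2^(n + 2))) (b : bool).

Lemma supp_setqbit_flag i b : supp (setqbit n i b) = supp i.
Proof.
apply/setP => v; have lt_vn := ltn_ord v.
by rewrite !inE qbit_setqbit ?ifN //; lia.
Qed.

Lemma flag1_setqbit i b : flag1 (setqbit n i b) = b.
Proof. by rewrite /flag1 qbit_setqbit ?eqxx //; lia. Qed.

Lemma flag2_setqbit_flag i b : flag2 (setqbit n i b) = flag2 i.
Proof. by rewrite /flag2 qbit_setqbit ?ifN //; lia. Qed.

End OrientationFlag.

Theorem proposition3p7 (C : numClosedFieldType) (n : nat)
  (X : {set {set 'I_n}}) (w : 'I_n -> C) (k alpha : nat)
  (U : 'M[C]_(2 ^ (n + 2 + alpha))) :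
  simplicial_complex X ->
  (forall v, 0 < w v) ->
  U \is unitarymx ->
  Pi_pm_k C X k *m @compress C (n + 2) alpha U *m Pi_pm_k C X k
    = Pi_pm_k C X k *m embS X k (P_down X w k) *m Pi_pm_k C X k ->
  Pi_k C X k *m @compress C (n + 2) alpha (gate1 (n + 2 + alpha) n HZ *m U) *m Pi_k C X k
    = embXp X k (fun s s' => Delta_down w k s s' / (K_down X w k * sqrtC 2)).
Proof.
move=> _ _ _ encU; apply/matrixP => i j.
rewrite mul_mx_proj mul_proj_mx [RHS]mxE.
case Xi: (inXp X k i); case Xj: (inXp X k j) => //=.
move: Xi Xj => /and3P [Xsi pos_i nTheta_i] /and3P [Xsj pos_j nTheta_j].
have encE b : @compress C (n + 2) alpha U (setqbit n i b) j
              = P_down X w k (Some (supp i, ~~ b)) (Some (supp j, true)).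
  rewrite (proj_conj_eq_entry encU); first last.
  - by rewrite /inXpm Xsj.
  - by rewrite /inXpm supp_setqbit_flag flag2_setqbit_flag Xsi.
  rewrite mxE /inS /state_of flag2_setqbit_flag supp_setqbit_flag flag1_setqbit.
  by rewrite (negbTE nTheta_i) (negbTE nTheta_j) Xsi Xsj (negbTE pos_j).
rewrite compress_gate1_mulmx ?gate1_mulmxE ?addn2 // big_bool.
rewrite -[qbit i n]/(flag1 i) (negbTE pos_i) !HZ_row0 !encE.
rewrite invfM mulrA -P_down_orient_diff /= expr0 expr1 mulN1r mul1r mulNr.
by rewrite addrC [RHS]mulrC mulrBr.
Qed.
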